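(* Let $\mathbb{F}_q$ be a fixed finite field with $q$ odd and $q\equiv1\pmod 4$. Then, as $g\to\infty$, $$\#\{P\in\mathbb{F}_q[T] \text{ monic irreducible}: \deg P=2g+1,\ L(\tfrac12,\chi_P)\neq 0\}\gg \frac{|P|}{(\log_q|P|)^2},$$ where $|P|=q^{2g+1}$ and $\log_q|P|=2g+1$.
   Context: $A=\mathbb{F}_q[T]$; for nonzero $f\in A$, $|f|=q^{\deg f}$. For a monic irreducible $Q$ and $a\in A$, $\left(\frac{a}{Q}\right)$ is $0$ if $Q\mid a$, $1$ if $a$ is a nonzero square mod $Q$, $-1$ otherwise; extended to monic $f=\prod Q_i^{e_i}$ by $\left(\frac{a}{f}\right)=\prod\left(\frac{a}{Q_i}\right)^{e_i}$, $\left(\frac{a}{1}\right)=1$. For monic irreducible $P$, $\chi_P(f)=\left(\frac{P}{f}\right)$. For $P$ of odd degree $2g+1$, $L(s,\chi_P)=\sum_{f\text{ monic}}\chi_P(f)|f|^{-s}$ is a polynomial in $u=q^{-s}$ of degree $2g$, and $L(\tfrac12,\chi_P)$ is its value at $u=q^{-1/2}$. The implied constant may depend on $q$. *)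

From HB Require Import structures.
From mathcomp Require Import all_boot all_order all_algebra all_field.
From Stdlib Require Import ClassicalEpsilon.
Set Implicit Arguments. Unset Strict Implicit. Unset Printing Implicit Defensive.
Import Order.TTheory GRing.Theory Num.Theory.
Local Open Scope ring_scope.

(* The monic polynomial T^n + sum_{i<n} c_i T^i; as c ranges over
   {ffun 'I_n -> F} this enumerates each monic polynomial of degree n once. *)
Definition mkmonic (F : finFieldType) (n : nat) (c : {ffun 'I_n -> F}) : {poly F} :=
  'X^n + \sum_(i < n) (c i)%:P * 'X^i.

Definition propb (P : Prop) : bool :=
  if excluded_middle_informative P then true else false.

Definition irrb (F : finFieldType) (Q : {poly F}) : bool := propb (irreducible_poly Q).

Definition legendre (F : finFieldType) (a Q : {poly F}) : int :=
  if Q %| a then 0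
  else if propb (exists b : {poly F}, Q %| a - b ^+ 2) then 1 else -1.

(* multiplicity e of Q in f (number of e >= 1 with Q^e | f, e <= deg f). *)
Definition mult (F : finFieldType) (Q f : {poly F}) : nat :=
  \sum_(1 <= e < size f) nat_of_bool (Q ^+ e %| f)%R.

(* (a/f) = prod over monic irreducible Q of (a/Q)^(v_Q(f)), for f monic;
   only Q with deg Q <= deg f can divide f. *)
Definition jacobi (F : finFieldType) (a f : {poly F}) : int :=
  \prod_(d < size f)
    \prod_(c : {ffun 'I_d -> F} | irrb (mkmonic c))
      legendre a (mkmonic c) ^+ mult (mkmonic c) f.

Definition chi (F : finFieldType) (P f : {poly F}) : int := jacobi P f.

(* coefficient of u^n in L(u, chi_P): sum over monic f of degree n *)
Definition Lcoef (F : finFieldType) (P : {poly F}) (n : nat) : int :=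
  \sum_(c : {ffun 'I_n -> F}) chi P (mkmonic c).

(* L(1/2, chi_P): the polynomial L(u,chi_P) (of degree 2g = deg P - 1)
   evaluated at u = q^(-1/2), computed in the algebraic numbers algC. *)
Definition Lhalf (F : finFieldType) (P : {poly F}) : algC :=
  \sum_(n < (size P).-1) (Lcoef P n)%:~R / (sqrtC (#|F|%:R)) ^+ n.

Definition nonvanish_count (F : finFieldType) (g : nat) : nat :=
  #|[pred c : {ffun 'I_(2 * g + 1) -> F} |
      irrb (mkmonic c) && (Lhalf (mkmonic c) != 0)]|.

From HB Require Import structures.
From mathcomp Require Import all_boot all_order all_algebra all_field zify ring lra.
From Stdlib Require Import ClassicalEpsilon.
Set Implicit Arguments. Unset Strict Implicit. Unset Printing Implicit Defensive.
Import Order.TTheory GRing.Theory Num.Theory.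
Local Open Scope ring_scope.

(* Proof of corollary2p6: with n = 2g+1 and q = #|F|, at least q^n / (2n)
   monic polynomials of degree n are irreducible, and L(1/2, chi_P) vanishes
   for none of them, so the constant C = 1/2 works.

   If P is irreducible and deg f < deg P,
   then no irreducible factor of f divides P, so chi_P(f) = +-1; hence the
   coefficient Lcoef P n, for n <= 2g, is a sum of q^n signs and is odd.  For
   s = sqrt q with q odd, s^m * sum_(n<m) a_n s^-n = A + B s with
   A + B = sum a_n (mod 2), while A + B s = 0 forces A^2 = q B^2 and hence
   A = B (mod 2).  Since sum_(n<2g+1) Lcoef P n is odd, L(1/2, chi_P) <> 0.

   Let L/F have degree n.  An element generating L is
   a root of a monic irreducible polynomial of degree n over F, which has at
   most n roots; any other element lies in a proper subfield of some degree
   0 < d < n, i.e. is a root of X^(q^d) - X.  Thus q^n <= n N + sum_(0<d<n) q^d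
   where N is the number of monic irreducibles of degree n, and since
   (q - 1) sum_(d<n) q^d = q^n - 1 this gives q^n <= 2 n N when q >= 3. *)

Lemma propbP (P : Prop) : reflect P (propb P).
Proof. by rewrite /propb; case: excluded_middle_informative => h; constructor. Qed.

Lemma card_bigcup_le (I T : finType) (P : pred I) (B : I -> {set T}) :
  (#|\bigcup_(i | P i) B i| <= \sum_(i | P i) #|B i|)%N.
Proof.
elim/big_rec2: _ => [|i u s _ IH]; first by rewrite cards0.
by apply: leq_trans (leq_card_setU _ _) _; rewrite leq_add2l.
Qed.

Lemma card_roots_lt (R : finFieldType) (p : {poly R}) : p != 0 ->
  (#|[set x | root p x]| < size p)%N.
Proof.
move=> p_neq0; rewrite cardE; apply: max_poly_roots => //.
  by apply/allP => x; rewrite mem_enum inE.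
exact: enum_uniq.
Qed.

Lemma dvdz_sumB (I : Type) (r : seq I) (P : pred I) (d : int) (f g : I -> int) :
  (forall i, P i -> (d %| f i - g i)%Z) ->
  (d %| \sum_(i <- r | P i) f i - \sum_(i <- r | P i) g i)%Z.
Proof. by move=> dfg; rewrite -sumrB rpred_sum. Qed.

Lemma sign_parity (x : int) : x ^+ 2 = 1 -> (2 %| x - 1)%Z.
Proof. by move/eqP; rewrite sqrf_eq1 => /orP[]/eqP->. Qed.

Section HalfIntegralPoint.
Variables (s : algC) (q : int).
Hypotheses (sq : s ^+ 2 = q%:~R) (s_neq0 : s != 0) (q_odd : ~~ (2 %| q)%Z).

(* s^m * sum_(n<m) a_n s^-n = A + B s with A + B = sum_(n<m) a_n (mod 2):
   passing from m to m+1 maps A + B s to q B + (A + a_m) s. *)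
Lemma scaled_sum_decomp (a : nat -> int) m : exists A B : int,
  (\sum_(n < m) (a n)%:~R / s ^+ n) * s ^+ m = A%:~R + B%:~R * s
  /\ (2 %| A + B - \sum_(n < m) a n)%Z.
Proof.
elim: m => [|m [A [B [eAB pAB]]]].
  by exists 0, 0; rewrite !big_ord0 !mul0r addr0.
exists (q * B), (A + a m); split.
  rewrite big_ord_recr /= mulrDl exprSr mulrA eAB.
  rewrite [_ / _ * _]mulrA divfK ?expf_neq0 //.
  rewrite intrM intrD -sq; ring.
have [k ->] : exists k, q = 2 * k + 1 by exists (q %/ 2)%Z; lia.
rewrite big_ord_recr /=.
have -> : (2 * k + 1) * B + (A + a m) - (\sum_(n < m) a n + a m)
  = (A + B - \sum_(n < m) a n) + k * B * 2 by ring.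
by rewrite rpredD // dvdz_mull.
Qed.

(* A + B s = 0 gives (A + B)(A - B) = (q - 1) B^2, which is even, so A + B
   cannot be odd (else A - B would be odd too). *)
Lemma dependency_parity (A B : int) : A%:~R + B%:~R * s = 0 -> (2 %| A + B)%Z.
Proof.
move=> /eqP; rewrite addr_eq0 => /eqP eA.
have /intr_inj hAB : (A ^+ 2)%:~R = (B ^+ 2 * q)%:~R :> algC.
  by rewrite intrM !rmorphXn /= eA sqrrN exprMn sq.
have : (A + B) * (A - B) = B ^+ 2 * (q - 1) by rewrite mulrDl !mulrBr -hAB; ring.
move: q_odd; nia.
Qed.

Lemma odd_sum_neq0 (a : nat -> int) m :
  ~~ (2 %| \sum_(n < m) a n)%Z -> \sum_(n < m) (a n)%:~R / s ^+ n != 0.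
Proof.
move=> odd_sum; apply/eqP => sum0.
have [A [B [eAB pAB]]] := scaled_sum_decomp a m.
have /dependency_parity : A%:~R + B%:~R * s = 0 by rewrite -eAB sum0 mul0r.
move: odd_sum pAB; lia.
Qed.

End HalfIntegralPoint.

Section MonicPolynomials.
Variable F : finFieldType.

Lemma size_mkmonic n (c : {ffun 'I_n -> F}) : size (mkmonic c) = n.+1.
Proof.
rewrite /mkmonic size_polyDl ?size_polyXn // ltnS.
apply: (big_ind (fun p : {poly F} => size p <= n)%N) => [|p r|i _].
- by rewrite size_poly0.
- by move=> sp sr; apply: leq_trans (size_polyD _ _) _; rewrite geq_max sp sr.
- by rewrite mul_polyC; apply: leq_trans (size_scale_leq _ _) _; rewrite size_polyXn.
Qed.

Lemma mkmonic_coefs n (p : {poly F}) :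
  p \is monic -> size p = n.+1 -> mkmonic [ffun i : 'I_n => p`_i] = p.
Proof.
move=> p_monic sp; rewrite -[RHS]coefK poly_def sp big_ord_recr /= addrC /mkmonic.
have -> : p`_n = 1 by move: p_monic; rewrite monicE /lead_coef sp => /eqP.
rewrite scale1r; congr (_ + _); apply: eq_bigr => i _.
by rewrite ffunE mul_polyC.
Qed.

End MonicPolynomials.

Section FiniteFieldExtensions.
Variable F : finFieldType.
Local Notation q := #|F|.

Lemma card_finField_natr0 : (q%:R : F) = 0.
Proof.
have [p p_prime pcharFp] := finPcharP F.
have := finNzRing_gt1 F.
rewrite (card_pprimeChar pcharFp) natrX (pcharf0 pcharFp) expr0n.
by case: (logn _ _).
Qed.

Lemma card_finFieldExt (L : splittingFieldType F) :
  #|FinFieldExtType L| = (q ^ \dim {:L})%N.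
Proof.
by rewrite -(card_vspacef (Vector.class (finvect_type L))) card_vspace.
Qed.

(* F has an extension of every positive degree k: the splitting field of
   X^(q^k) - X, whose roots are exactly the elements fixed by the k-th power
   of the Frobenius automorphism. *)
Lemma finFieldExt_of_dim k : (0 < k)%N -> {L : splittingFieldType F | \dim {:L} = k}.
Proof.
move=> k_gt0; set m := (q ^ k)%N.
have m_gt1 : (m > 1)%N by rewrite (ltn_exp2l 0) ?finNzRing_gt1.
have m_gt0 := ltnW m_gt1.
have m1_gt0 : (m.-1 > 0)%N by rewrite -ltnS prednK.
pose X_m (R : nzRingType) : {poly R} := 'X^m - 'X.
have X_mE R : X_m R = ('X^(m.-1) - 1) * ('X - 0).
  by rewrite /X_m subr0 mulrBl mul1r -exprSr prednK.
have /FinSplittingFieldFor[/= L splitL] : X_m F != 0.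
  by rewrite X_mE monic_neq0 ?rpredM ?monicXsubC ?monicXnsubC.
rewrite [map_poly _ _]rmorphB rmorphXn /= map_polyX -/(X_m L) in splitL.
exists L; apply: (@expnI q); first exact: finNzRing_gt1.
rewrite -card_finFieldExt -/m.
have mL0 : (m%:R : L) = 0.
  by rewrite /m natrX -(rmorph_nat (in_alg L)) card_finField_natr0 rmorph0 expr0n gtn_eqF.
have /finField_galois_generator[/= frob _ frobE] : (1 <= {:L})%VS by apply: sub1v.
pose Em := fixedSpace (frob ^+ k)%g; rewrite dimv1 expn1 in frobE.
have {splitL} [zs X_mL genL] := splitL.
have zs_uniq : uniq zs.
  rewrite -separable_prod_XsubC -(eqp_separable X_mL) X_mE separable_root andbC.
  rewrite /root !hornerE subr_eq0 eq_sym expr0n gtn_eqF ?oner_eq0 //=.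
  rewrite cyclotomic.separable_Xn_sub_1 // -subn1 natrB // subr_eq0.
  by rewrite mL0 eq_sym oner_eq0.
have zs_fixed : zs =i Em.
  move=> z; rewrite -root_prod_XsubC -(eqp_root X_mL) (sameP fixedSpaceP eqP).
  rewrite /root !hornerE subr_eq0 /= /m; congr (_ == z).
  elim: (k) => [|i IHi]; first by rewrite gal_id.
  by rewrite expgSr expnSr exprM IHi galM ?frobE ?memvf.
have Em_full : Em = {:L}%VS.
  apply/eqP; rewrite eqEsubv subvf -genL -[Em]subfield_closed agenvS //.
  by rewrite subv_add sub1v; apply/span_subvP => z; rewrite zs_fixed.
have /eq_card-> : FinFieldExtType L =i zs by move=> z; rewrite zs_fixed Em_full memvf.
apply: succn_inj; rewrite (card_uniqP _) //= -(size_prod_XsubC _ id).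
by rewrite -(eqp_size X_mL) size_polyDl size_polyXn // size_polyN size_polyX.
Qed.

Variables (n : nat) (L : splittingFieldType F).
Hypothesis dimL : \dim {:L} = n.

(* A generator of L is a root of a monic irreducible polynomial of degree n,
   namely its minimal polynomial. *)
Lemma generator_root_irreducible (x : L) : (0 < n)%N -> <<1; x>>%VS = fullv ->
  exists c : {ffun 'I_n -> F},
    irreducible_poly (mkmonic c) /\ root (map_poly (in_alg L) (mkmonic c)) x.
Proof.
move=> n_gt0 genx.
have /polyOver1P [p minPolyE] := minPolyOver 1%AS x.
have size_p : size p = n.+1.
  rewrite -(size_map_poly (in_alg L)) -minPolyE size_minPoly; congr _.+1.
  by have := dim_Fadjoin 1%AS x; rewrite dimv1 muln1 genx dimL.
have p_monic : p \is monic by rewrite -(map_monic (in_alg L)) -minPolyE monic_minPoly.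
exists [ffun i : 'I_n => p`_i]; rewrite mkmonic_coefs //.
split; last by rewrite -minPolyE root_minPoly.
split=> [|r r_nconst r_dvd]; first by rewrite size_p ltnS.
have /(minPoly_irr (alg_polyOver 1%AS r)) : map_poly (in_alg L) r %| minPoly 1%AS x.
  by rewrite minPolyE dvdp_map.
rewrite minPolyE eqp_map => /orP [//|/eqp_size].
by rewrite size_map_poly size_poly1 => /eqP; rewrite (negbTE r_nconst).
Qed.

(* A non-generator lies in a proper subfield of some degree 0 < d < n, hence is
   fixed by the d-th power of the Frobenius map. *)
Lemma nongenerator_fixed (x : L) : <<1; x>>%VS != fullv ->
  exists2 d : 'I_n, (0 < d)%N & x ^+ (q ^ d) = x.
Proof.
move=> ngenx.
have d_lt : (\dim <<1; x>>%AS < n)%N.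
  rewrite -dimL ltn_neqAle dimvS ?subvf // andbT.
  by apply: contra ngenx => /eqP e; rewrite eqEdim subvf /= e.
exists (Ordinal d_lt); first exact: adim_gt0.
by apply/eqP; rewrite -Fermat's_little_theorem memv_adjoin.
Qed.

End FiniteFieldExtensions.

Section IrreducibleCount.
Variable F : finFieldType.
Local Notation q := #|F|.

Definition irr_count n := #|[pred c : {ffun 'I_n -> F} | irrb (mkmonic c)]|.

(* q^n <= n N_n + sum_(0<d<n) q^d, by splitting an extension of degree n into
   its generators (roots of the N_n monic irreducibles of degree n) and its
   non-generators (roots of some X^(q^d) - X with 0 < d < n). *)
Lemma card_ext_le n : (0 < n)%N ->
  (q ^ n <= n * irr_count n + \sum_(d < n | (0 < d)%N) q ^ d)%N.
Proof.
move=> n_gt0; have [L dimL] := finFieldExt_of_dim F n_gt0.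
pose fL := FinFieldExtType L.
pose G := [set x : fL | <<1; (x : L)>>%VS == fullv].
have card_G : (#|G| <= n * irr_count n)%N.
  apply: leq_trans (subset_leq_card (_ : G \subset \bigcup_(c | irrb (mkmonic c))
     [set x : fL | root (map_poly (in_alg L) (mkmonic c) : {poly fL}) x])) _.
    apply/subsetP => x; rewrite inE => /eqP genx.
    have [c [c_irr c_root]] := generator_root_irreducible dimL n_gt0 genx.
    by apply/bigcupP; exists c; rewrite ?inE //; apply/propbP.
  apply: leq_trans (card_bigcup_le _ _) _.
  apply: (@leq_trans (\sum_(c : {ffun 'I_n -> F} | irrb (mkmonic c)) n)%N);
    last by rewrite sum_nat_const mulnC.
  apply: leq_sum => c _.
  have := @card_roots_lt fL (map_poly (in_alg L) (mkmonic c)).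
  rewrite size_map_poly size_mkmonic ltnS; apply.
  by rewrite -size_poly_eq0 size_map_poly size_mkmonic.
have card_nG : (#|~: G| <= \sum_(d < n | (0 < d)%N) q ^ d)%N.
  apply: leq_trans (subset_leq_card (_ : ~: G \subset
     \bigcup_(d < n | (0 < d)%N) [set x : fL | root ('X^(q ^ d) - 'X) x])) _.
    apply/subsetP => x; rewrite !inE => ngenx.
    have [d d_gt0 xd] := nongenerator_fixed dimL ngenx.
    by apply/bigcupP; exists d; rewrite ?inE // rootE !hornerE xd subrr.
  apply: leq_trans (card_bigcup_le _ _) _; apply: leq_sum => d d_gt0.
  have qd_gt1 : (1 < q ^ d)%N by rewrite -(expn0 q) ltn_exp2l ?finNzRing_gt1.
  have size_Xd : size ('X^(q ^ d) - 'X : {poly fL}) = (q ^ d).+1.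
    by rewrite size_polyDl ?size_polyXn // size_polyN size_polyX ltnS.
  have := @card_roots_lt fL ('X^(q ^ d) - 'X); rewrite size_Xd ltnS; apply.
  by rewrite -size_poly_eq0 size_Xd.
by have := cardsC G; rewrite card_finFieldExt dimL => <-; apply: leq_add.
Qed.

(* For q >= 3, q^n <= 2 n N_n, since 2 sum_(d<n) q^d <= (q-1) sum_(d<n) q^d
   = q^n - 1. *)
Lemma irr_count_lower n : (2 < q)%N -> (0 < n)%N -> (q ^ n <= 2 * (n * irr_count n))%N.
Proof.
move=> q_gt2 n_gt0.
have geom : (2 * \sum_(d < n | (0 < d)%N) q ^ d < q ^ n)%N.
  apply: (@leq_ltn_trans (q.-1 * \sum_(d < n) q ^ d)).
    apply: leq_mul; first lia.
    by rewrite [leqLHS]big_mkcond; apply: leq_sum => d _; case: ifP.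
  by rewrite -predn_exp ltn_predL expn_gt0; lia.
have := card_ext_le n_gt0; lia.
Qed.

End IrreducibleCount.

Section QuadraticCharacter.
Variable F : finFieldType.
Implicit Types P Q a f : {poly F}.

Lemma irreducible_ndvdp P Q :
  irreducible_poly P -> (1 < size Q)%N -> (size Q < size P)%N -> ~~ (Q %| P).
Proof.
move=> [_ P_irr] Q_nconst lt_QP; apply/negP.
move=> /(P_irr Q (negbT (gtn_eqF Q_nconst))) /eqp_size eQP.
by rewrite eQP ltnn in lt_QP.
Qed.

Lemma legendre_sign a Q : ~~ (Q %| a) -> legendre a Q ^+ 2 = 1.
Proof. by rewrite /legendre => /negbTE->; case: ifP. Qed.

(* chi_P(f) is a sign when P is irreducible and deg f < deg P: no irreducible
   factor of f can divide P. *)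
Lemma chi_sign P f : irreducible_poly P -> (size f < size P)%N -> chi P f ^+ 2 = 1.
Proof.
move=> P_irr lt_fP; rewrite /chi /jacobi -prodrXl; apply: big1 => d _.
rewrite -prodrXl; apply: big1 => c /propbP [Q_nconst _].
rewrite -exprM mulnC exprM legendre_sign ?expr1n //.
apply: irreducible_ndvdp; rewrite // size_mkmonic.
exact: leq_ltn_trans (ltn_ord d) lt_fP.
Qed.

(* The coefficient of u^n in L(u, chi_P), n < deg P, is a sum of q^n signs,
   hence odd when q is odd. *)
Lemma Lcoef_odd P n : odd #|F| -> irreducible_poly P -> (n.+1 < size P)%N ->
  ~~ (2 %| Lcoef P n)%Z.
Proof.
move=> q_odd P_irr lt_nP.
have : (2 %| Lcoef P n - \sum_(c : {ffun 'I_n -> F}) 1)%Z.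
  apply: dvdz_sumB => c _; apply: sign_parity; apply: chi_sign => //.
  by rewrite size_mkmonic.
have : ~~ (2 %| (#|F| ^ n)%N%:Z)%Z by rewrite dvdzE /= dvdn2 oddX q_odd orbT.
rewrite sumr_const card_ffun card_ord; move: (#|F| ^ n)%N => m; rewrite natz; lia.
Qed.

Lemma Lhalf_neq0 P : odd #|F| -> irreducible_poly P -> odd (size P).-1 -> Lhalf P != 0.
Proof.
move=> q_odd P_irr deg_odd; rewrite /Lhalf.
apply: (@odd_sum_neq0 _ #|F|%:Z).
- by rewrite sqrtCK.
- by rewrite sqrtC_eq0 pnatr_eq0 -lt0n (leq_trans _ (finNzRing_gt1 F)).
- by rewrite dvdzE /= dvdn2 negbK.
have : (2 %| \sum_(n < (size P).-1) Lcoef P n - \sum_(n < (size P).-1) 1)%Z.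
  apply: dvdz_sumB => n _.
  have : ~~ (2 %| Lcoef P n)%Z.
    by apply: Lcoef_odd => //; rewrite -ltn_predRL.
  lia.
have : ~~ (2 %| ((size P).-1)%:Z)%Z by rewrite dvdzE /= dvdn2 negbK.
rewrite sumr_const card_ord; move: (size P).-1 => m; rewrite natz; lia.
Qed.

End QuadraticCharacter.

Theorem corollary2p6 (F : finFieldType) (hodd : odd #|F|) (h4 : (#|F| %% 4 = 1)%N) :
  exists C : rat, 0 < C /\
    exists g0 : nat, forall g : nat, (g0 <= g)%N ->
      C * (#|F| ^ (2 * g + 1))%N%:R
        <= (nonvanish_count F g)%:R * ((2 * g + 1) ^ 2)%N%:R.
Proof.
have q_gt2 : (2 < #|F|)%N.
  by have := finNzRing_gt1 F; rewrite leq_eqVlt => /orP[/eqP q2|//]; rewrite -q2 in hodd.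
exists (1 / 2); split=> //; exists 0%N => g _.
have -> : nonvanish_count F g = irr_count F (2 * g + 1).
  apply: eq_card => c; rewrite !inE; case: (boolP (irrb _)) => //= /propbP c_irr.
  by rewrite Lhalf_neq0 // size_mkmonic /= addn1 /= oddM.
have n_gt0 : (0 < 2 * g + 1)%N by rewrite addn1.
have := irr_count_lower q_gt2 n_gt0; move: (irr_count _ _) => N count_le.
have : (#|F| ^ (2 * g + 1) <= 2 * (N * (2 * g + 1) ^ 2))%N.
  by apply: leq_trans count_le _; nia.
rewrite -(ler_nat rat) !natrM; move: (#|F| ^ _)%N%:R (N%:R * _) => X Y; lra.
Qed.
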